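(* Suppose $\{\mathcal{G}_k\}$ is uniformly jointly strongly connected with constant $B\ge1$. Then an algorithm in $\mathcal{A}_{\rm ave}$ achieves global asymptotic consensus if either $$\sum_{s=0}^\infty\ \prod_{k=s(n-1)B}^{(s+1)(n-1)B-1}\alpha_k=\infty$$ or $$\sum_{s=0}^\infty\ \prod_{k=s(n-1)B}^{(s+1)(n-1)B-1}(1-\alpha_k-\eta_k)=\infty.$$
   Context: Network of nodes $\mathcal{V}=\{1,\dots,n\}$, $n\ge 3$, discrete time, states $x_i(k)\in\mathbb{R}$. At each time $k$ a digraph $\mathcal{G}_k=(\mathcal{V},\mathcal{E}_k)$ is given; $j$ is a neighbor of $i$ at time $k$ if $(j,i)\in\mathcal{E}_k$, every node is always its own neighbor; $\mathcal{N}_i(k)$ is the neighbor set. The algorithm is $$x_i(k+1)=\eta_k x_i(k)+\alpha_k\min_{j\in\mathcal{N}_i(k)}x_j(k)+(1-\eta_k-\alpha_k)\max_{j\in\mathcal{N}_i(k)}x_j(k),$$ with node-independent parameters; $\mathcal{A}_{\rm ave}$ consists of those with $\eta_k\in(0,1]$, $\alpha_k\in[0,1-\eta_k]$ for all $k$. Global asymptotic consensus: for every initial time $k_0\ge0$ and initial value $x(k_0)=x^0\in\mathbb{R}^n$ there is $z_*$ with $x_i(k)\to z_*$ for all $i$. A digraph is strongly connected if every node is reachable from every other node by a directed path. $\mathcal{G}([k_1,k_2])=(\mathcal{V},\cup_{k\in[k_1,k_2]}\mathcal{E}_k)$. $\{\mathcal{G}_k\}$ is uniformly jointly strongly connected if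 there is an integer $B\ge1$ with $\mathcal{G}([k,k+B-1])$ strongly connected for all $k\ge0$. *)

From Stdlib Require Import Reals Lra Lia List.
Import ListNotations.
Open Scope R_scope.

(* Nodes are 0..n-1. A time-varying digraph: E k j i = true iff (j,i) is an
   edge of G_k. Self loops are always treated as present (see neighbors). *)
Definition graph_seq := nat -> nat -> nat -> bool.

Definition neighbors (n : nat) (E : graph_seq) (k i : nat) : list nat :=
  i :: filter (fun j => E k j i) (seq 0 n).

Definition nbr_min (n : nat) (E : graph_seq) (k i : nat) (x : nat -> R) : R :=
  fold_right (fun j acc => Rmin (x j) acc) (x i) (neighbors n E k i).

Definition nbr_max (n : nat) (E : graph_seq) (k i : nat) (x : nat -> R) : R :=
  fold_right (fun j acc => Rmax (x j) acc) (x i) (neighbors n E k i).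

Definition step (n : nat) (E : graph_seq) (eta alpha : nat -> R) (k : nat)
  (x : nat -> R) : nat -> R :=
  fun i => eta k * x i + alpha k * nbr_min n E k i x
           + (1 - eta k - alpha k) * nbr_max n E k i x.

(* trajectory started at time k0 with x(k0) = x0: traj ... t = x(k0 + t) *)
Fixpoint traj (n : nat) (E : graph_seq) (eta alpha : nat -> R) (k0 : nat)
  (x0 : nat -> R) (t : nat) : nat -> R :=
  match t with
  | O => x0
  | S t' => step n E eta alpha (k0 + t') (traj n E eta alpha k0 x0 t')
  end.

Definition in_A_ave (eta alpha : nat -> R) : Prop :=
  forall k, 0 < eta k <= 1 /\ 0 <= alpha k <= 1 - eta k.

Definition global_consensus (n : nat) (E : graph_seq) (eta alpha : nat -> R) : Prop :=
  forall (k0 : nat) (x0 : nat -> R), exists z : R,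
    forall i, (i < n)%nat -> Un_cv (fun t => traj n E eta alpha k0 x0 t i) z.

Definition union_edge (E : graph_seq) (k1 k2 j i : nat) : Prop :=
  exists k, (k1 <= k <= k2)%nat /\ E k j i = true.

Inductive reach (n : nat) (r : nat -> nat -> Prop) : nat -> nat -> Prop :=
  | reach_refl : forall i, reach n r i i
  | reach_step : forall i j l, reach n r i j -> (l < n)%nat -> r j l -> reach n r i l.

Definition strongly_connected (n : nat) (r : nat -> nat -> Prop) : Prop :=
  forall i j, (i < n)%nat -> (j < n)%nat -> reach n r i j.

Definition UJSC (n : nat) (E : graph_seq) (B : nat) : Prop :=
  (1 <= B)%nat /\
  forall k, strongly_connected n (union_edge E k (k + B - 1)).

Fixpoint prod_range (f : nat -> R) (a len : nat) : R :=
  match len with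
  | O => 1
  | S l => prod_range f a l * f (a + l)%nat
  end.

Definition block_sum (f : nat -> R) (L N : nat) : R :=
  sum_f_R0 (fun s => prod_range f (s * L) L) N.

Definition block_series_diverges (f : nat -> R) (L : nat) : Prop :=
  cv_infty (block_sum f L).

From Stdlib Require Import Reals Lra Lia List FunctionalExtensionality Classical.
Open Scope R_scope.

(* Write M(t), m(t) for the largest and smallest state at time k0 + t.
   - Each step is a convex combination of a node's own state and of the
     minimum and maximum over its neighbours, so [m(t), M(t)] shrinks.
   - Lag spreading: below a bound M0, a node whose neighbour j lags M0 by T
     lags M0 by at least alpha_k T after the step (the alpha-term pulls it
     down to j's level); a node is its own neighbour, so its lag persists.
   - Counting: in every window of B steps the union graph is strongly
     connected, so some edge leaves the set of lagging nodes and that set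
     gains a node.  Starting from a minimiser, after L = (n-1)B steps every
     node lags M(t0) by (prod of alpha over the L steps) * (M - m)(t0); hence
     (M - m)(t0 + L) <= (1 - prod alpha) (M - m)(t0).
   - A real-sequence lemma: d_{r+1} <= (1 - p_r) d_r with a divergent series
     of p_r forces d_r -> 0.  Sampling M - m at the block boundaries gives
     consensus when the alpha-block series diverges.
   - Negating all states swaps min and max, i.e. replaces alpha_k by
     1 - alpha_k - eta_k, which reduces the second alternative to the first. *)

Section Folds.
Variable x : nat -> R.

Local Notation fmax := (fold_right (fun j acc => Rmax (x j) acc)).
Local Notation fmin := (fold_right (fun j acc => Rmin (x j) acc)).

Lemma fold_max_ub (c : R) (l : list nat) :
  c <= fmax c l /\ (forall j, In j l -> x j <= fmax c l).
Proof.
  induction l as [|a l [IHc IHl]]; simpl; [split; [lra | tauto]|].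
  split.
  - eapply Rle_trans; [exact IHc | apply Rmax_r].
  - intros j [<- | Hj]; [apply Rmax_l|].
    eapply Rle_trans; [exact (IHl j Hj) | apply Rmax_r].
Qed.

Lemma fold_max_lub (c b : R) (l : list nat) :
  c <= b -> (forall j, In j l -> x j <= b) -> fmax c l <= b.
Proof.
  intros Hc Hl; induction l as [|a l IH]; simpl; auto.
  apply Rmax_lub; [apply Hl, in_eq | apply IH; intros j Hj; apply Hl, in_cons, Hj].
Qed.

Lemma fold_min_lb (c : R) (l : list nat) :
  fmin c l <= c /\ (forall j, In j l -> fmin c l <= x j).
Proof.
  induction l as [|a l [IHc IHl]]; simpl; [split; [lra | tauto]|].
  split.
  - eapply Rle_trans; [apply Rmin_r | exact IHc].
  - intros j [<- | Hj]; [apply Rmin_l|].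
    eapply Rle_trans; [apply Rmin_r | exact (IHl j Hj)].
Qed.

Lemma fold_min_glb (c b : R) (l : list nat) :
  b <= c -> (forall j, In j l -> b <= x j) -> b <= fmin c l.
Proof.
  intros Hc Hl; induction l as [|a l IH]; simpl; auto.
  apply Rmin_glb; [apply Hl, in_eq | apply IH; intros j Hj; apply Hl, in_cons, Hj].
Qed.

Lemma fold_min_attained (c : R) (l : list nat) :
  fmin c l = c \/ exists j, In j l /\ fmin c l = x j.
Proof.
  induction l as [|a l IH]; simpl; auto.
  apply Rmin_case_strong; intros _; [right; exists a; split; [apply in_eq | reflexivity]|].
  destruct IH as [IH | [j [Hj IH]]]; [left; exact IH | right; exists j].
  split; [apply in_cons, Hj | exact IH].
Qed.

End Folds.

Lemma fold_max_opp (x : nat -> R) (c : R) (l : list nat) :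
  fold_right (fun j acc => Rmin (- x j) acc) (- c) l
  = - fold_right (fun j acc => Rmax (x j) acc) c l.
Proof. induction l as [|a l IH]; simpl; [reflexivity|]. rewrite IH, Ropp_Rmax; reflexivity. Qed.

Lemma fold_min_opp (x : nat -> R) (c : R) (l : list nat) :
  fold_right (fun j acc => Rmax (- x j) acc) (- c) l
  = - fold_right (fun j acc => Rmin (x j) acc) c l.
Proof. induction l as [|a l IH]; simpl; [reflexivity|]. rewrite IH, Ropp_Rmin; reflexivity. Qed.

Section Counting.
Context {A : Type}.
Implicit Types (f g : A -> bool) (l : list A).

Lemma filter_length_mono f g l :
  (forall a, In a l -> f a = true -> g a = true) ->
  (length (filter f l) <= length (filter g l))%nat.
Proof.
  induction l as [|b l IH]; simpl; intros H; [lia|].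
  specialize (IH (fun a Ha => H a (or_intror Ha))).
  specialize (H b (or_introl eq_refl)).
  destruct (f b), (g b); simpl; lia.
Qed.

Lemma filter_length_strict f g l :
  (forall a, In a l -> f a = true -> g a = true) ->
  (exists a, In a l /\ f a = false /\ g a = true) ->
  (length (filter f l) < length (filter g l))%nat.
Proof.
  induction l as [|b l IH]; simpl; intros H [a [Ha [Hf Hg]]]; [contradiction|].
  assert (Hmono := filter_length_mono f g l (fun a Ha => H a (or_intror Ha))).
  assert (Hb := H b (or_introl eq_refl)).
  destruct Ha as [<- | Ha].
  - rewrite Hf, Hg; simpl; lia.
  - assert (IH' : (length (filter f l) < length (filter g l))%nat).
    { apply IH; [intros c Hc; apply H; right; exact Hc | exists a; auto]. }
    destruct (f b), (g b); simpl; lia.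
Qed.

Lemma filter_length_pos f l :
  (0 < length (filter f l))%nat <-> exists a, In a l /\ f a = true.
Proof.
  split.
  - destruct (filter f l) as [|a r] eqn:Hfl; simpl; [lia|]; intros _.
    exists a; apply filter_In; rewrite Hfl; apply in_eq.
  - intros [a Ha]; apply filter_In in Ha.
    destruct (filter f l); [contradiction | simpl; lia].
Qed.

Lemma filter_length_lt f l :
  (length (filter f l) < length l)%nat -> exists a, In a l /\ f a = false.
Proof.
  intros H. rewrite <- (filter_length f l) in H.
  destruct (proj1 (filter_length_pos (fun a => negb (f a)) l) ltac:(lia)) as [a [Ha Hf]].
  exists a; split; [exact Ha | destruct (f a); [discriminate | reflexivity]].
Qed.

Lemma filter_length_full f l :
  (length l <= length (filter f l))%nat -> forall a, In a l -> f a = true.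
Proof.
  intros H. apply forallb_forall, filter_length_forallb.
  pose proof (filter_length_le f l); lia.
Qed.

End Counting.

Lemma reach_exit (n : nat) (r : nat -> nat -> Prop) (P : nat -> Prop) (i l : nat) :
  reach n r i l -> P i -> ~ P l ->
  exists j l', P j /\ ~ P l' /\ (l' < n)%nat /\ r j l'.
Proof.
  induction 1 as [i | i j l _ IH Hl Hjl]; intros Hi Hnl; [contradiction|].
  destruct (classic (P j)) as [Hj | Hj]; [exists j, l; auto | apply IH; auto].
Qed.

Fixpoint partial_sum (f : nat -> R) (r : nat) : R :=
  match r with O => 0 | S r' => partial_sum f r' + f r' end.

Lemma partial_sum_sum_f_R0 (f : nat -> R) (N : nat) :
  partial_sum f (S N) = sum_f_R0 f N.
Proof. induction N as [|N IH]; simpl in *; [ring | rewrite <- IH; reflexivity]. Qed.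

Lemma partial_sum_shift (f : nat -> R) (k r : nat) :
  partial_sum f (k + r) = partial_sum f k + partial_sum (fun s => f (k + s)%nat) r.
Proof.
  induction r as [|r IH]; simpl; [rewrite Nat.add_0_r; ring|].
  rewrite Nat.add_succ_r; simpl; rewrite IH; ring.
Qed.

Lemma tail_diverges (f : nat -> R) (k : nat) :
  cv_infty (sum_f_R0 f) -> forall M, exists r, M <= partial_sum (fun s => f (k + s)%nat) r.
Proof.
  intros Hdiv M. destruct (Hdiv (M + partial_sum f k)) as [N HN].
  exists (S N). specialize (HN (k + N)%nat ltac:(lia)).
  rewrite <- partial_sum_sum_f_R0, <- Nat.add_succ_r, partial_sum_shift in HN. lra.
Qed.

Lemma prod_range_app (f : nat -> R) (a l1 l2 : nat) :
  prod_range f a (l1 + l2) = prod_range f a l1 * prod_range f (a + l1) l2.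
Proof.
  induction l2 as [|l2 IH]; [rewrite Nat.add_0_r; simpl; ring|].
  rewrite Nat.add_succ_r; simpl. rewrite IH, Nat.add_assoc. ring.
Qed.

Lemma prod_range_bounds (f : nat -> R) (a l : nat) :
  (forall k, 0 <= f k <= 1) -> 0 <= prod_range f a l <= 1.
Proof.
  intros H. induction l as [|l IH]; simpl; [lra|]. specialize (H (a + l)%nat).
  split; [apply Rmult_le_pos | rewrite <- (Rmult_1_r 1); apply Rmult_le_compat]; lra.
Qed.

Section Decay.
Variables d p : nat -> R.
Hypothesis d_nonneg : forall r, 0 <= d r.
Hypothesis p_bounds : forall r, 0 <= p r <= 1.
Hypothesis d_contracts : forall r, d (S r) <= (1 - p r) * d r.

Lemma partial_sum_p_nonneg (r : nat) : 0 <= partial_sum p r.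
Proof. induction r as [|r IH]; simpl; [lra | specialize (p_bounds r); lra]. Qed.

Lemma decay_weighted (r : nat) : d r * (1 + partial_sum p r) <= d 0.
Proof.
  induction r as [|r IH]; simpl; [lra|].
  assert (HS := partial_sum_p_nonneg r).
  specialize (d_contracts r). specialize (p_bounds r). specialize (d_nonneg r).
  assert (d (S r) * (1 + (partial_sum p r + p r))
          <= (1 - p r) * d r * (1 + (partial_sum p r + p r)))
    by (apply Rmult_le_compat_r; lra).
  assert (0 <= p r * d r * (partial_sum p r + p r))
    by (repeat apply Rmult_le_pos; lra).
  nra.
Qed.

Lemma decay_to_zero :
  (forall M, exists r, M <= partial_sum p r) -> Un_cv d 0.
Proof.
  intros Hdiv eps Heps. destruct (Hdiv (d 0 / eps)) as [N HN]. exists N.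
  intros r Hr. unfold Rdist; rewrite Rminus_0_r, Rabs_right by (apply Rle_ge, d_nonneg).
  assert (Hdec : d r <= d N).
  { apply (decreasing_prop d); [intros s; specialize (d_contracts s) | lia].
    specialize (p_bounds s); specialize (d_nonneg s); nra. }
  assert (HW := decay_weighted N).
  assert (d 0 <= eps * partial_sum p N).
  { apply (Rmult_le_compat_l eps) in HN; [|lra].
    unfold Rdiv in HN; rewrite Rmult_comm, Rmult_assoc, Rinv_l, Rmult_1_r in HN; lra. }
  assert (HS := partial_sum_p_nonneg N).
  destruct (Rlt_or_le (d N) eps) as [Hlt | Hge]; [lra|].
  assert (eps * (1 + partial_sum p N) <= d N * (1 + partial_sum p N))
    by (apply Rmult_le_compat_r; lra).
  lra.
Qed.

End Decay.

Lemma nonincreasing_cv0 (D : nat -> R) (ts : nat -> nat) :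
  Un_decreasing D -> (forall t, 0 <= D t) -> Un_cv (fun r => D (ts r)) 0 -> Un_cv D 0.
Proof.
  intros Hdec Hpos Hcv eps Heps. destruct (Hcv eps Heps) as [N HN].
  exists (ts N). intros t Ht. specialize (HN N (le_n N)).
  unfold Rdist in *; rewrite Rminus_0_r, Rabs_right in * by (apply Rle_ge, Hpos).
  eapply Rle_lt_trans; [apply decreasing_prop; [exact Hdec | exact Ht] | exact HN].
Qed.

Lemma squeeze_common_limit (M m : nat -> R) :
  Un_decreasing M -> Un_growing m -> (forall t, m t <= M t) ->
  Un_cv (fun t => M t - m t) 0 ->
  exists z, forall y : nat -> R, (forall t, m t <= y t <= M t) -> Un_cv y z.
Proof.
  intros HM Hm Hmm Hgap.
  assert (Hlb : has_lb M).
  { exists (- m 0%nat). intros v [t ->]. unfold opp_seq.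
    pose proof (growing_prop m t 0 Hm ltac:(lia)). specialize (Hmm t). lra. }
  destruct (decreasing_cv M HM Hlb) as [z Hz]. exists z.
  intros y Hy eps Heps.
  destruct (Hz (eps / 2) ltac:(lra)) as [N1 HN1].
  destruct (Hgap (eps / 2) ltac:(lra)) as [N2 HN2].
  exists (max N1 N2). intros t Ht.
  specialize (HN1 t ltac:(lia)). specialize (HN2 t ltac:(lia)). specialize (Hy t).
  unfold Rdist in *. rewrite Rminus_0_r in HN2.
  revert HN1 HN2. unfold Rabs; repeat destruct Rcase_abs; intros; lra.
Qed.

Section Neighbors.
Variables (n : nat) (E : graph_seq) (k i : nat) (x : nat -> R).

Lemma neighbor_of_edge (j : nat) : (j < n)%nat -> E k j i = true -> In j (neighbors n E k i).
Proof. intros Hj He. right. apply filter_In. split; [apply in_seq; lia | exact He]. Qed.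

Lemma nbr_min_le (j : nat) : In j (neighbors n E k i) -> nbr_min n E k i x <= x j.
Proof. apply fold_min_lb. Qed.

Lemma nbr_max_ge (j : nat) : In j (neighbors n E k i) -> x j <= nbr_max n E k i x.
Proof. apply fold_max_ub. Qed.

Hypothesis Hi : (i < n)%nat.

Lemma neighbor_lt (j : nat) : In j (neighbors n E k i) -> (j < n)%nat.
Proof.
  intros [<- | Hj]; [exact Hi|].
  apply filter_In in Hj as [Hj _]; apply in_seq in Hj; lia.
Qed.

Lemma nbr_min_glb (b : R) : (forall j, (j < n)%nat -> b <= x j) -> b <= nbr_min n E k i x.
Proof. intros H. apply fold_min_glb; [apply H, Hi | intros j Hj; apply H, neighbor_lt, Hj]. Qed.

Lemma nbr_max_lub (b : R) : (forall j, (j < n)%nat -> x j <= b) -> nbr_max n E k i x <= b.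
Proof. intros H. apply fold_max_lub; [apply H, Hi | intros j Hj; apply H, neighbor_lt, Hj]. Qed.

End Neighbors.

Section Dynamics.
Variables (n : nat) (E : graph_seq) (eta alpha : nat -> R).
Hypothesis HA : in_A_ave eta alpha.

(* The alpha-term pulls node i at least down towards any of its neighbours j:
   below a common upper bound M0, i's lag after the step is at least
   alpha_k times the lag of j before it. *)
Lemma step_pulls_down (k : nat) (x : nat -> R) (i j : nat) (M0 : R) :
  (i < n)%nat -> In j (neighbors n E k i) -> (forall l, (l < n)%nat -> x l <= M0) ->
  alpha k * (M0 - x j) <= M0 - step n E eta alpha k x i.
Proof.
  intros Hi Hj Hx. destruct (HA k) as [Heta Halpha]. unfold step.
  assert (Hmax := nbr_max_lub n E k i x Hi M0 Hx).
  assert (Hmin := nbr_min_le n E k i x j Hj).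
  assert (Hxi := Hx i Hi).
  assert (eta k * x i <= eta k * M0) by (apply Rmult_le_compat_l; lra).
  assert (alpha k * nbr_min n E k i x <= alpha k * x j) by (apply Rmult_le_compat_l; lra).
  assert ((1 - eta k - alpha k) * nbr_max n E k i x <= (1 - eta k - alpha k) * M0)
    by (apply Rmult_le_compat_l; lra).
  lra.
Qed.

(* Each new state is a convex combination of current states, so any interval
   containing all states is invariant. *)
Lemma step_within (k : nat) (x : nat -> R) (lo hi : R) (i : nat) :
  (i < n)%nat -> (forall j, (j < n)%nat -> lo <= x j <= hi) ->
  lo <= step n E eta alpha k x i <= hi.
Proof.
  intros Hi Hx. destruct (HA k) as [Heta Halpha]. unfold step.
  assert (Hmax := nbr_max_lub n E k i x Hi hi (fun j Hj => proj2 (Hx j Hj))).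
  assert (Hmin := nbr_min_glb n E k i x Hi lo (fun j Hj => proj1 (Hx j Hj))).
  assert (Hmin' := nbr_min_le n E k i x i (in_eq _ _)).
  assert (Hmax' := nbr_max_ge n E k i x i (in_eq _ _)).
  assert (Hxi := Hx i Hi).
  split; nra.
Qed.

Lemma traj_within (k0 : nat) (x0 : nat -> R) (t : nat) (lo hi : R) :
  (forall j, (j < n)%nat -> lo <= traj n E eta alpha k0 x0 t j <= hi) ->
  forall d j, (j < n)%nat -> lo <= traj n E eta alpha k0 x0 (t + d) j <= hi.
Proof.
  intros Ht d; induction d as [|d IH]; intros j Hj; [rewrite Nat.add_0_r; auto|].
  rewrite Nat.add_succ_r; apply step_within; auto.
Qed.

End Dynamics.

Definition state_max (n : nat) (x : nat -> R) : R :=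
  fold_right (fun j acc => Rmax (x j) acc) (x 0%nat) (seq 0 n).
Definition state_min (n : nat) (x : nat -> R) : R :=
  fold_right (fun j acc => Rmin (x j) acc) (x 0%nat) (seq 0 n).

Section Extremes.
Variables (n : nat) (x : nat -> R).

Lemma state_bounds (i : nat) : (i < n)%nat -> state_min n x <= x i <= state_max n x.
Proof. intros Hi; split; [apply fold_min_lb | apply fold_max_ub]; apply in_seq; lia. Qed.

Hypothesis Hn : (0 < n)%nat.

Lemma state_max_lub (b : R) : (forall i, (i < n)%nat -> x i <= b) -> state_max n x <= b.
Proof.
  intros H; apply fold_max_lub; [apply H, Hn | intros j Hj; apply in_seq in Hj; apply H; lia].
Qed.

Lemma state_min_glb (b : R) : (forall i, (i < n)%nat -> b <= x i) -> b <= state_min n x.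
Proof.
  intros H; apply fold_min_glb; [apply H, Hn | intros j Hj; apply in_seq in Hj; apply H; lia].
Qed.

Lemma state_min_attained : exists i, (i < n)%nat /\ x i = state_min n x.
Proof.
  unfold state_min. destruct (fold_min_attained x (x 0%nat) (seq 0 n)) as [H | [j [Hj H]]].
  - exists 0%nat; auto.
  - apply in_seq in Hj. exists j; split; [lia | auto].
Qed.

End Extremes.

Definition lags (M0 T : R) (y : nat -> R) (i : nat) : bool :=
  if Rle_dec T (M0 - y i) then true else false.

Lemma lags_spec (M0 T : R) (y : nat -> R) (i : nat) :
  lags M0 T y i = true <-> T <= M0 - y i.
Proof. unfold lags; destruct Rle_dec; split; congruence || tauto. Qed.

Section Spreading.
Variables (n : nat) (E : graph_seq) (B : nat) (eta alpha : nat -> R) (k0 : nat) (x0 : nat -> R).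
Hypothesis HU : UJSC n E B.
Hypothesis HA : in_A_ave eta alpha.

Local Notation X := (traj n E eta alpha k0 x0).

Variables (t0 : nat) (M0 : R).
Hypothesis below_M0 : forall u l, (t0 <= u)%nat -> (l < n)%nat -> X u l <= M0.

(* Lags are measured relative to a window starting at time s: after d steps
   a lag T has been scaled by alpha_{k0+s} ... alpha_{k0+s+d-1}.
   One step transmits the lag of a neighbour j to node i. *)
Lemma lag_step (s d i j : nat) (T : R) :
  (t0 <= s)%nat -> (i < n)%nat -> In j (neighbors n E (k0 + (s + d)) i) ->
  prod_range alpha (k0 + s) d * T <= M0 - X (s + d) j ->
  prod_range alpha (k0 + s) (S d) * T <= M0 - X (s + S d) i.
Proof.
  intros Hs Hi Hj Hlag.
  assert (Hpull := step_pulls_down n E eta alpha HA (k0 + (s + d)) (X (s + d)) i j M0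
                     Hi Hj (fun l Hl => below_M0 (s + d) l ltac:(lia) Hl)).
  destruct (HA (k0 + (s + d))%nat) as [_ [Halpha _]].
  assert (alpha (k0 + (s + d))%nat * (prod_range alpha (k0 + s) d * T)
          <= alpha (k0 + (s + d))%nat * (M0 - X (s + d) j))
    by (apply Rmult_le_compat_l; lra).
  rewrite Nat.add_succ_r; simpl prod_range. rewrite <- Nat.add_assoc. simpl X. lra.
Qed.

(* Since every node is its own neighbour, a lag persists (scaled by alpha). *)
Lemma lag_persists (s d e i : nat) (T : R) :
  (t0 <= s)%nat -> (i < n)%nat ->
  prod_range alpha (k0 + s) d * T <= M0 - X (s + d) i ->
  prod_range alpha (k0 + s) (d + e) * T <= M0 - X (s + (d + e)) i.
Proof.
  intros Hs Hi Hlag. induction e as [|e IH]; [rewrite Nat.add_0_r; exact Hlag|].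
  rewrite Nat.add_succ_r. apply lag_step with (j := i); auto. apply in_eq.
Qed.

Definition lag_count (t : nat) (T : R) : nat :=
  length (filter (lags M0 T (X t)) (seq 0 n)).

Lemma lag_count_le (t : nat) (T : R) : (lag_count t T <= n)%nat.
Proof.
  unfold lag_count. pose proof (filter_length_le (lags M0 T (X t)) (seq 0 n)) as H.
  rewrite length_seq in H; exact H.
Qed.

Lemma lag_count_mono (s : nat) (T : R) :
  (t0 <= s)%nat -> (lag_count s T <= lag_count (s + B) (prod_range alpha (k0 + s) B * T))%nat.
Proof.
  intros Hs. apply filter_length_mono. intros i Hi Hlag.
  apply in_seq in Hi. apply lags_spec in Hlag. apply lags_spec.
  apply (lag_persists s 0 B i T Hs ltac:(lia)). simpl; rewrite Nat.add_0_r; lra.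
Qed.

(* ... and, unless none or all nodes lag, strong connectivity of the union graph
   over the window provides an edge from a lagging node to a non-lagging one,
   which makes one more node lag. *)
Lemma lag_count_grows (s : nat) (T : R) :
  (t0 <= s)%nat -> (0 < lag_count s T)%nat -> (lag_count s T < n)%nat ->
  (lag_count s T < lag_count (s + B) (prod_range alpha (k0 + s) B * T))%nat.
Proof.
  intros Hs Hpos Hlt. destruct HU as [HB Hconn].
  assert (Hpersist : forall i, (i < n)%nat -> T <= M0 - X s i -> forall e,
            prod_range alpha (k0 + s) (0 + e) * T <= M0 - X (s + (0 + e)) i).
  { intros i Hi HT e. apply lag_persists; auto. simpl; rewrite Nat.add_0_r; lra. }
  apply filter_length_strict.
  { intros i Hi Hlag. apply in_seq in Hi. apply lags_spec in Hlag. apply lags_spec.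
    exact (Hpersist i ltac:(lia) Hlag B). }
  unfold lag_count in Hpos, Hlt.
  destruct (proj1 (filter_length_pos _ _) Hpos) as [i [Hi Hlag_i]].
  assert (Hlt' : (length (filter (lags M0 T (X s)) (seq 0 n)) < length (seq 0 n))%nat)
    by (rewrite length_seq; exact Hlt).
  destruct (filter_length_lt _ _ Hlt') as [l [Hl Hlag_l]].
  apply in_seq in Hi, Hl.
  destruct (reach_exit n _ (fun v => (v < n)%nat /\ lags M0 T (X s) v = true) i l
              (Hconn (k0 + s)%nat i l ltac:(lia) ltac:(lia)))
    as [j [l' [[Hj Hlag_j] [Hnot [Hl' [k [Hk Ejl']]]]]]];
    [split; [lia | exact Hlag_i] | intros [_ H]; congruence |].
  exists l'. split; [apply in_seq; lia|]. split.
  { destruct (lags M0 T (X s) l') eqn:Q; [exfalso; apply Hnot; auto | reflexivity]. }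
  apply lags_spec in Hlag_j. apply lags_spec.
  set (d := (k - (k0 + s))%nat).
  assert (Hnew : prod_range alpha (k0 + s) (S d) * T <= M0 - X (s + S d) l').
  { apply lag_step with (j := j); auto.
    - replace (k0 + (s + d))%nat with k by lia. apply neighbor_of_edge; auto.
    - exact (Hpersist j Hj Hlag_j d). }
  assert (HB' := lag_persists s (S d) (B - S d) l' T Hs Hl' Hnew).
  replace (S d + (B - S d))%nat with B in HB' by lia. exact HB'.
Qed.

End Spreading.

Section Contraction.
Variables (n : nat) (E : graph_seq) (B : nat) (eta alpha : nat -> R) (k0 : nat) (x0 : nat -> R).
Hypothesis HA : in_A_ave eta alpha.

Local Notation X := (traj n E eta alpha k0 x0).
Local Notation L := ((n - 1) * B)%nat.

Lemma traj_between_extremes (t u i : nat) :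
  (t <= u)%nat -> (i < n)%nat -> state_min n (X t) <= X u i <= state_max n (X t).
Proof.
  intros Htu Hi. replace u with (t + (u - t))%nat by lia.
  apply traj_within; auto. intros j Hj; apply state_bounds; exact Hj.
Qed.

Hypothesis Hn : (0 < n)%nat.
Hypothesis HU : UJSC n E B.

Lemma lagging_nodes_increase (t0 c : nat) : (c <= n - 1)%nat ->
  (c + 1 <= lag_count n E eta alpha k0 x0 (state_max n (X t0)) (t0 + c * B)
              (prod_range alpha (k0 + t0) (c * B) * (state_max n (X t0) - state_min n (X t0))))%nat.
Proof.
  set (M0 := state_max n (X t0)). set (D := M0 - state_min n (X t0)).
  assert (Hbelow : forall u l, (t0 <= u)%nat -> (l < n)%nat -> X u l <= M0)
    by (intros u l Hu Hl; apply (traj_between_extremes t0 u l Hu Hl)).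
  induction c as [|c IH]; intros Hc.
  - apply filter_length_pos. destruct (state_min_attained n (X t0) Hn) as [i0 [Hi0 Hmin]].
    exists i0. split; [apply in_seq; lia|]. apply lags_spec.
    simpl; rewrite Nat.add_0_r. unfold D; lra.
  - specialize (IH ltac:(lia)).
    set (T := prod_range alpha (k0 + t0) (c * B) * D) in IH.
    assert (Hs : (t0 <= t0 + c * B)%nat) by lia.
    assert (Hmono := lag_count_mono n E B eta alpha k0 x0 HA t0 M0 Hbelow (t0 + c * B) T Hs).
    assert (Hgrow := lag_count_grows n E B eta alpha k0 x0 HU HA t0 M0 Hbelow (t0 + c * B) T Hs).
    assert (Hle := lag_count_le n E eta alpha k0 x0 M0 (t0 + c * B) T).
    replace (t0 + S c * B)%nat with (t0 + c * B + B)%nat by lia.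
    replace (prod_range alpha (k0 + t0) (S c * B) * D)
      with (prod_range alpha (k0 + (t0 + c * B)) B * T).
    2: { replace (S c * B)%nat with (c * B + B)%nat by lia.
         unfold T; rewrite prod_range_app, Nat.add_assoc; ring. }
    destruct (Nat.lt_ge_cases (lag_count n E eta alpha k0 x0 M0 (t0 + c * B) T) n);
      [specialize (Hgrow ltac:(lia) ltac:(lia))|]; lia.
Qed.

Lemma all_nodes_lag (t0 i : nat) : (i < n)%nat ->
  prod_range alpha (k0 + t0) L * (state_max n (X t0) - state_min n (X t0))
  <= state_max n (X t0) - X (t0 + L) i.
Proof.
  intros Hi. assert (Hall := lagging_nodes_increase t0 (n - 1) (le_n _)).
  apply lags_spec. apply (filter_length_full _ (seq 0 n)); [|apply in_seq; lia].
  rewrite length_seq. unfold lag_count in Hall. lia.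
Qed.

Lemma spread_contracts (t0 : nat) :
  state_max n (X (t0 + L)) - state_min n (X (t0 + L))
  <= (1 - prod_range alpha (k0 + t0) L) * (state_max n (X t0) - state_min n (X t0)).
Proof.
  assert (Hmax : state_max n (X (t0 + L))
                 <= state_max n (X t0) - prod_range alpha (k0 + t0) L
                                          * (state_max n (X t0) - state_min n (X t0))).
  { apply state_max_lub; [exact Hn|]. intros i Hi. pose proof (all_nodes_lag t0 i Hi). lra. }
  assert (Hmin : state_min n (X t0) <= state_min n (X (t0 + L))).
  { apply state_min_glb; [exact Hn|]. intros i Hi.
    apply (traj_between_extremes t0); [apply Nat.le_add_r | exact Hi]. }
  lra.
Qed.

End Contraction.

Lemma consensus_of_alpha_blocks (n : nat) (E : graph_seq) (B : nat) (eta alpha : nat -> R) :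
  (2 <= n)%nat -> UJSC n E B -> in_A_ave eta alpha ->
  block_series_diverges alpha ((n - 1) * B) -> global_consensus n E eta alpha.
Proof.
  intros Hn HU HA Hdiv k0 x0.
  set (L := ((n - 1) * B)%nat).
  set (X := traj n E eta alpha k0 x0).
  set (M := fun t => state_max n (X t)). set (m := fun t => state_min n (X t)).
  assert (HL : (1 <= L)%nat) by (destruct HU as [HB _]; unfold L; nia).
  assert (Hbetween : forall t u i, (t <= u)%nat -> (i < n)%nat -> m t <= X u i <= M t)
    by (intros t u i; apply traj_between_extremes; exact HA).
  assert (HM : Un_decreasing M).
  { intros t. apply state_max_lub; [lia|]. intros i Hi; apply (Hbetween t (S t) i); lia. }
  assert (Hm : Un_growing m).
  { intros t. apply state_min_glb; [lia|]. intros i Hi; apply (Hbetween t (S t) i); lia. }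
  assert (Hspread : forall t, m t <= M t).
  { intros t. destruct (Hbetween t t 0%nat); [lia | lia | lra]. }
  assert (Hgap : Un_cv (fun t => M t - m t) 0).
  { (* sample the spread at the block boundaries (k0 + r) L, shifted to the start k0 *)
    set (ts := fun r => ((k0 + r) * L - k0)%nat).
    apply nonincreasing_cv0 with (ts := ts).
    - intros t. specialize (HM t). specialize (Hm t). lra.
    - intros t. specialize (Hspread t). lra.
    - apply decay_to_zero with (p := fun r => prod_range alpha ((k0 + r) * L) L).
      + intros r. specialize (Hspread (ts r)). lra.
      + intros r. apply prod_range_bounds. intros k. destruct (HA k). lra.
      + intros r. replace (ts (S r)) with (ts r + L)%nat by (unfold ts; nia).
        replace ((k0 + r) * L)%nat with (k0 + ts r)%nat by (unfold ts; nia).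
        apply spread_contracts; [exact HA | lia | exact HU].
      + exact (tail_diverges (fun s => prod_range alpha (s * L) L) k0 Hdiv). }
  destruct (squeeze_common_limit M m HM Hm Hspread Hgap) as [z Hz].
  exists z. intros i Hi. apply Hz. intros t. apply (Hbetween t t i); lia.
Qed.

(* Replacing x by -x swaps min and max, i.e. swaps the weights alpha_k and
   1 - alpha_k - eta_k. *)
Lemma step_opp (n : nat) (E : graph_seq) (eta alpha : nat -> R) (k : nat) (x : nat -> R) :
  step n E eta (fun k => 1 - alpha k - eta k) k (fun j => - x j)
  = fun i => - step n E eta alpha k x i.
Proof.
  apply functional_extensionality; intros i. unfold step, nbr_min, nbr_max.
  rewrite fold_max_opp, fold_min_opp. ring.
Qed.

Lemma traj_opp (n : nat) (E : graph_seq) (eta alpha : nat -> R) (k0 : nat) (x0 : nat -> R)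
  (t : nat) :
  traj n E eta (fun k => 1 - alpha k - eta k) k0 (fun j => - x0 j) t
  = fun i => - traj n E eta alpha k0 x0 t i.
Proof. induction t as [|t IH]; simpl; [reflexivity|]. rewrite IH; apply step_opp. Qed.

Lemma consensus_of_dual (n : nat) (E : graph_seq) (eta alpha : nat -> R) :
  global_consensus n E eta (fun k => 1 - alpha k - eta k) -> global_consensus n E eta alpha.
Proof.
  intros Hdual k0 x0. destruct (Hdual k0 (fun j => - x0 j)) as [z Hz].
  exists (- z). intros i Hi.
  apply Un_cv_ext with (un := opp_seq (fun t => - traj n E eta alpha k0 x0 t i)).
  - intros t; unfold opp_seq; apply Ropp_involutive.
  - apply CV_opp. specialize (Hz i Hi).
    refine (Un_cv_ext _ _ _ _ Hz). intros t; rewrite traj_opp; reflexivity.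
Qed.

Theorem theorem5 (n : nat) (E : graph_seq) (B : nat) (eta alpha : nat -> R) :
  (3 <= n)%nat ->
  UJSC n E B ->
  in_A_ave eta alpha ->
  (block_series_diverges alpha ((n - 1) * B)
   \/ block_series_diverges (fun k => 1 - alpha k - eta k) ((n - 1) * B)) ->
  global_consensus n E eta alpha.
Proof.
  intros Hn HU HA [Hdiv | Hdiv].
  - apply (consensus_of_alpha_blocks n E B); auto; lia.
  - apply consensus_of_dual, (consensus_of_alpha_blocks n E B); auto; [lia|].
    intros k. destruct (HA k). lra.
Qed.
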